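(* The name-generation monad $T$ on $[\mathsf{Inj},\mathsf{Set}]$ is observational.
   Context: $\mathsf{Inj}$ is the category of finite sets and injections; $[\mathsf{Inj},\mathsf{Set}]$ is the functor category (cartesian, products computed pointwise). The name-generation monad is given by $(TX)(a)=\operatorname{colim}_{b\in\mathsf{Inj}}X(a+b)$ (the colimit of the functor $b\mapsto X(a+b)$, acting on injections $b\to b'$ via $1_a+(-)$), with unit induced by $b=\emptyset$ and multiplication induced by $(a+b)+c\cong a+(b+c)$; it is a commutative (and affine) monad. For a commutative monad $T$ on a cartesian monoidal category: $\mathsf{Kl}(T)$ has morphisms $f:A\rightsquigarrow B$ corresponding to $f^\sharp:A\to TB$, composition $(g\circledcirc f)^\sharp=\mu\circ T(g^\sharp)\circ f^\sharp$, tensor $\otimes$ equal to $\times$ on objects with $(f\otimes g)^\sharp=\nabla\circ(f^\sharp\times g^\sharp)$; $\mathsf{force}_A^\sharp=1_{TA}$; $\mathsf{copy}_n^\sharp=\eta\circ\Delta_n:TX\to T((TX)^n)$; $\mathsf{samp}_n=\mathsf{force}^{\otimes n}\circledcirc\mathsf{copy}_n:TX\rightsquigarrow X^{\otimes n}$. $T$ is observational if for every $X$ the family $(\mathsf{samp}_n)_{n\in\mathbb{N}}$ is jointly monic in $\mathsf{Kl}(T)$. *)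

From Stdlib Require Import Relations ClassicalEpsilon.
From mathcomp Require Import all_boot.



Unset Printing Implicit Defensive.

Record inj (m n : nat) := Inj { injf :> 'I_m -> 'I_n; injfP : injective injf }.
Arguments Inj {m n}.
Arguments injf {m n}.
Arguments injfP {m n}.

Definition idI (n : nat) : inj n n :=
  Inj (id : 'I_n -> 'I_n) (fun x y (h : id x = id y) => h).

Definition compI {m n p} (g : inj n p) (f : inj m n) : inj m p :=
  Inj (g \o f) (ssrfun.inj_comp (injfP g) (injfP f)).

Definition sum_fun {a a' b b'} (f : 'I_a -> 'I_a') (g : 'I_b -> 'I_b')
  (i : 'I_(a + b)) : 'I_(a' + b') :=
  match split i with
  | inl j => lshift b' (f j)
  | inr k => rshift a' (g k)
  end.

Lemma sum_fun_inj {a a' b b'} (f : 'I_a -> 'I_a') (g : 'I_b -> 'I_b') :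
  injective f -> injective g -> injective (sum_fun f g).
Proof.
move=> fi gi i1 i2; rewrite /sum_fun.
case: splitP => j1 e1; case: splitP => j2 e2 /(congr1 val) /= E;
  apply: val_inj; rewrite /= e1 e2.
- by rewrite (fi _ _ (val_inj E)).
- by have := ltn_ord (f j1); rewrite E -ltn_subRL subnn.
- by have := ltn_ord (f j2); rewrite -E -ltn_subRL subnn.
- by move/addnI: E => /val_inj /gi ->.
Qed.

Definition sumI {a a' b b'} (f : inj a a') (g : inj b b') : inj (a + b) (a' + b') :=
  Inj (sum_fun f g) (sum_fun_inj f g (injfP f) (injfP g)).

Record psh := Psh { ob :> nat -> Type; act : forall m n, inj m n -> ob m -> ob n }.
Arguments act {p m n}.

Definition is_functor (X : psh) : Prop :=
  (forall n (x : X n), act (idI n) x = x) /\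
  (forall m n p (f : inj m n) (g : inj n p) (x : X m),
      act (compI g f) x = act g (act f x)).

Definition nat_trans (X Y : psh) := forall n, X n -> Y n.

Definition is_natural {X Y : psh} (al : nat_trans X Y) : Prop :=
  forall m n (f : inj m n) (x : X m), al n (act f x) = act f (al m x).

Definition pprod (X Y : psh) : psh :=
  @Psh (fun n => (X n * Y n)%type)
       (fun m n f p => (act f p.1, act f p.2)).

Definition pterm : psh := @Psh (fun _ => unit) (fun _ _ _ u => u).

(* (T X)(a) = colim_{b in Inj} X(a + b), computed as the quotient of
   {b & X(a+b)} by the equivalence relation generated by
   (b, x) ~ (b', X(1_a + h) x) for h : b -> b' in Inj.  The quotient is
   represented by the set of equivalence classes. *)
Definition tcar (X : psh) (a : nat) := {b : nat & X (a + b)}.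

Definition tstep (X : psh) (a : nat) (z w : tcar X a) : Prop :=
  exists h : inj (projT1 z) (projT1 w),
    projT2 w = act (sumI (idI a) h) (projT2 z).

Definition teqv (X : psh) (a : nat) := clos_refl_sym_trans _ (@tstep X a).

Definition Tob (X : psh) (a : nat) :=
  {P : tcar X a -> Prop | exists z, P = teqv X a z}.

Definition tcls {X : psh} {a : nat} (z : tcar X a) : Tob X a :=
  exist _ (teqv X a z) (ex_intro _ z erefl).

Definition trepr {X : psh} {a : nat} (t : Tob X a) : tcar X a :=
  proj1_sig (constructive_indefinite_description _ (proj2_sig t)).

Definition Tact (X : psh) {m n} (f : inj m n) (t : Tob X m) : Tob X n :=
  let z := trepr t in
  tcls (existT (fun b => X (n + b)) (projT1 z)
               (act (sumI f (idI (projT1 z))) (projT2 z))).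

Definition T (X : psh) : psh := @Psh (Tob X) (fun m n => @Tact X m n).

Definition eta (X : psh) : nat_trans X (T X) := fun a x =>
  tcls (existT (fun b => X (a + b)) 0
               (act (Inj _ (@cast_ord_inj _ _ (esym (addn0 a)))) x)).

Definition mu {X : psh} : nat_trans (T (T X)) (T X) := fun a t =>
  let z := trepr t in
  let u := trepr (projT2 z) in
  tcls (existT (fun b => X (a + b)) (projT1 z + projT1 u)
    (act (Inj _ (@cast_ord_inj _ _ (esym (addnA a (projT1 z) (projT1 u)))))
         (projT2 u))).

Definition Tmap {X Y : psh} (al : nat_trans X Y) : nat_trans (T X) (T Y) :=
  fun a t => let z := trepr t in
  tcls (existT (fun b => Y (a + b)) (projT1 z) (al _ (projT2 z))).

Definition tstr (A B : psh) : nat_trans (pprod A (T B)) (T (pprod A B)) :=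
  fun a p => let z := trepr p.2 in
  tcls (existT (fun b => (pprod A B) (a + b)) (projT1 z)
               (act (Inj _ (@lshift_inj a (projT1 z))) p.1, projT2 z)).

Definition tcostr (A B : psh) : nat_trans (pprod (T A) B) (T (pprod A B)) :=
  fun a p => let z := trepr p.1 in
  tcls (existT (fun b => (pprod A B) (a + b)) (projT1 z)
               (projT2 z, act (Inj _ (@lshift_inj a (projT1 z))) p.2)).

Definition nabla (A B : psh) : nat_trans (pprod (T A) (T B)) (T (pprod A B)) :=
  fun a p => mu a (Tmap (tcostr A B) a (tstr (T A) B a p)).

(* a Kleisli morphism f : A ~> B is given by f^# : A -> T B *)
Definition kid (A : psh) : nat_trans A (T A) := eta A.

Definition kcomp {A B C : psh} (g : nat_trans B (T C)) (f : nat_trans A (T B))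
  : nat_trans A (T C) := fun a x => mu a (Tmap g a (f a x)).

Definition ktensor {A B C D : psh} (f : nat_trans A (T B)) (g : nat_trans C (T D))
  : nat_trans (pprod A C) (T (pprod B D)) :=
  fun a p => nabla B D a (f a p.1, g a p.2).

Fixpoint ppow (X : psh) (n : nat) : psh :=
  match n with 0 => pterm | n'.+1 => pprod (ppow X n') X end.

Definition force (X : psh) : nat_trans (T X) (T X) := fun a t => t.

Fixpoint force_pow (X : psh) (n : nat) : nat_trans (ppow (T X) n) (T (ppow X n)) :=
  match n return nat_trans (ppow (T X) n) (T (ppow X n)) with
  | 0 => kid pterm
  | n'.+1 => ktensor (force_pow X n') (force X)
  end.

Fixpoint diag (Y : psh) (n : nat) : nat_trans Y (ppow Y n) :=
  match n return nat_trans Y (ppow Y n) with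
  | 0 => fun _ _ => tt
  | n'.+1 => fun a y => (diag Y n' a y, y)
  end.

Definition copy (X : psh) (n : nat) : nat_trans (T X) (T (ppow (T X) n)) :=
  fun a t => eta _ a (diag (T X) n a t).

Definition samp (X : psh) (n : nat) : nat_trans (T X) (T (ppow X n)) :=
  kcomp (force_pow X n) (copy X n).

(* Write f x = [(c, [(b, y)])] and g x = [(c', [(b', y')])], with c, c' the
   outer and b, b' the inner fresh names.  Sampling n times yields the n-tuple
   of copies of y whose b inner names are moved to n pairwise disjoint blocks;
   equality of the samples provides injections of c + n b and c' + n b' into a
   common e under which the two tuples agree.  Each outer name meets at most
   one block, so for n > 2 (c + c') there is a block i that, on both sides,
   avoids the images of all outer names.  Keeping the outer names in a first
   copy of e and sending block i to a second copy separates the two levels of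
   names of T (T X) again, and the i-th components then witness f x = g x. *)

From mathcomp Require Import all_boot zify.
From Stdlib Require Import Relations ClassicalEpsilon FunctionalExtensionality.
From Stdlib Require Import PropExtensionality ProofIrrelevance.

Set Implicit Arguments.
Unset Strict Implicit.
Unset Printing Implicit Defensive.

Lemma inj_ext m n (f g : inj m n) : (forall i, val (f i) = val (g i)) -> f = g.
Proof.
case: f g => f fi [g gi] /= E.
have efg : f = g by apply: functional_extensionality => i; apply: val_inj; exact: E.
by subst g; congr Inj; apply: proof_irrelevance.
Qed.

Lemma act_ext (X : psh) m n (f g : inj m n) (x : X m) :
  (forall i, val (f i) = val (g i)) -> act f x = act g x.
Proof. by move/inj_ext->. Qed.

Section FunctorAction.

Variables (X : psh) (HX : is_functor X).

Lemma act_compI m n p (f : inj m n) (g : inj n p) (x : X m) :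
  act g (act f x) = act (compI g f) x.
Proof. by rewrite HX.2. Qed.

Lemma act_id_pointwise n (f : inj n n) (x : X n) :
  (forall i, val (f i) = val i) -> act f x = x.
Proof. by move=> E; rewrite (act_ext _ (g := idI n)) // HX.1. Qed.

End FunctorAction.

(** * Injections as functions on [nat] *)

(* Turns equalities between composites of injections into linear arithmetic. *)
Definition injn {m n} (f : inj m n) (v : nat) : nat :=
  if insub v is Some o then val (f o) else 0.

Lemma injnE m n (f : inj m n) (o : 'I_m) : val (f o) = injn f (val o).
Proof. by rewrite /injn valK. Qed.

Lemma injn_lt m n (f : inj m n) v : v < m -> injn f v < n.
Proof. by move=> lv; rewrite /injn (insubT (fun x => x < m) lv) ltn_ord. Qed.

Lemma injn_inj m n (f : inj m n) v w :
  v < m -> w < m -> injn f v = injn f w -> v = w.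
Proof.
move=> lv lw; rewrite /injn (insubT (fun x => x < m) lv) (insubT (fun x => x < m) lw).
by move=> /val_inj /(injfP f) /(congr1 val).
Qed.

Lemma injn_pointwise m n (f : inj m n) (F : nat -> nat) :
  (forall o, val (f o) = F (val o)) -> forall v, injn f v = if v < m then F v else 0.
Proof.
move=> E v; rewrite /injn; case: insubP => [o lt vo|/negbTE -> //].
by rewrite lt E vo.
Qed.

Definition inj_of_nat m n (F : nat -> nat) (Flt : forall i, i < m -> F i < n)
    (Finj : forall i j, i < m -> j < m -> F i = F j -> i = j) : inj m n.
Proof.
refine (@Inj m n (fun o => Ordinal (Flt _ (ltn_ord o))) _).
move=> x y /(congr1 val) /= E; apply: val_inj; exact: Finj (ltn_ord x) (ltn_ord y) E.
Defined.

Lemma injn_of_nat m n F Flt Finj v :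
  injn (@inj_of_nat m n F Flt Finj) v = if v < m then F v else 0.
Proof. exact: (injn_pointwise (F := F)). Qed.

Lemma injn_sumI a a' b b' (f : inj a a') (g : inj b b') v :
  injn (sumI f g) v =
  if v < a + b then (if v < a then injn f v else a' + injn g (v - a)) else 0.
Proof.
apply: (injn_pointwise (F := fun v => if v < a then injn f v else a' + injn g (v - a))).
move=> o; rewrite /sumI /= /sum_fun.
by case: splitP => [j|k] /= ->; rewrite ?addKn -injnE ?ltn_ord // ltnNge leq_addr.
Qed.

Lemma injn_idI n v : injn (idI n) v = if v < n then v else 0.
Proof. exact: (injn_pointwise (F := id)). Qed.

Lemma injn_lshift m k v : injn (Inj _ (@lshift_inj m k)) v = if v < m then v else 0.
Proof. exact: (injn_pointwise (F := id)). Qed.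

Lemma injn_cast m n (e : m = n) v :
  injn (Inj _ (@cast_ord_inj m n e)) v = if v < m then v else 0.
Proof. exact: (injn_pointwise (F := id)). Qed.

Lemma injn_compI m n p (f : inj m n) (g : inj n p) v :
  injn (compI g f) v = if v < m then injn g (injn f v) else 0.
Proof.
by apply: (injn_pointwise (F := fun v => injn g (injn f v))) => o /=; rewrite injnE (injnE f).
Qed.

(* Splits on an innermost [if], whose condition is then plain arithmetic. *)
Ltac case_inner_if := match goal with |- context [if ?c then _ else _] =>
  lazymatch c with context [if _ then _ else _] => fail | _ =>
    let E := fresh "E" in case E: c => /=; try rewrite !addKn in E |- * end end.

Ltac injn_bounds := repeat match goal with
  | |- context [injn ?f ?x] =>
    lazymatch goal with _ : is_true (x < _) -> is_true (injn f x < _) |- _ => fail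
    | _ => have := @injn_lt _ _ f x; move=> ? end
  | _ : context [injn ?f ?x] |- _ =>
    lazymatch goal with _ : is_true (x < _) -> is_true (injn f x < _) |- _ => fail
    | _ => have := @injn_lt _ _ f x; move=> ? end
  end.

(* [lia] treats [injn f x] as an atom, so congruence must be supplied. *)
Ltac injn_congr := repeat match goal with
  | |- context [injn ?f ?x] => match goal with |- context [injn f ?y] =>
    assert_fails (constr_eq x y);
    lazymatch goal with _ : x = y -> injn f x = injn f y |- _ => fail
    | _ => have : x = y -> injn f x = injn f y by move-> end; move=> ? end
  end.

Ltac injn_arith := repeat case_inner_if; injn_bounds; injn_congr; simpl in *; lia.

Ltac injn_simpl := rewrite ?injnE ?(injn_sumI, injn_idI, injn_lshift, injn_cast, injn_compI).

Ltac inj_pointwise := let i := fresh "i" in move=> i; have := ltn_ord i; injn_simpl; injn_arith.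

Lemma inj_amalgamation b e1 e2 (h : inj b e1) (g : inj b e2) :
  exists v (p : inj e1 v) (q : inj e2 v), compI p h = compI q g.
Proof.
pose qf (j : 'I_e2) : 'I_(e1 + e2) :=
  if [pick i | g i == j] is Some i then lshift e2 (h i) else rshift e1 j.
have qi : injective qf.
  move=> j1 j2; rewrite /qf.
  case: pickP => [i1 /eqP <-|N1]; case: pickP => [i2 /eqP <-|N2].
  - by move/lshift_inj/(injfP h) ->.
  - by move/(congr1 val) => /= E; have := ltn_ord (h i1); rewrite E ltnNge leq_addr.
  - by move/(congr1 val) => /= E; have := ltn_ord (h i2); rewrite -E ltnNge leq_addr.
  - by move/(congr1 val) => /= /addnI /val_inj.
exists (e1 + e2), (Inj _ (@lshift_inj e1 e2)), (Inj qf qi); apply: inj_ext => i /=.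
rewrite /qf; case: pickP => [i' /eqP E|/(_ i)]; last by rewrite eqxx.
by rewrite (injfP g _ _ E).
Qed.

(** * The quotient defining [T] *)

Definition cospan (X : psh) a (z w : tcar X a) : Prop :=
  exists e (h : inj (projT1 z) e) (h' : inj (projT1 w) e),
    act (sumI (idI a) h) (projT2 z) = act (sumI (idI a) h') (projT2 w).

Section Quotient.

Variables (X : psh) (HX : is_functor X) (a : nat).

Lemma act_sumI_compI b e v (h : inj b e) (p : inj e v) (y : X (a + b)) :
  act (sumI (idI a) (compI p h)) y = act (sumI (idI a) p) (act (sumI (idI a) h) y).
Proof. by rewrite act_compI //; apply: act_ext; inj_pointwise. Qed.

Lemma cospan_refl (z : tcar X a) : cospan z z.
Proof. by exists (projT1 z), (idI _), (idI _). Qed.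

Lemma cospan_sym (z w : tcar X a) : cospan z w -> cospan w z.
Proof. by case=> e [h [h' E]]; exists e, h', h. Qed.

Lemma cospan_trans (z w u : tcar X a) : cospan z w -> cospan w u -> cospan z u.
Proof.
case=> e1 [h1 [h2 E1]] [e2 [g2 [g3 E2]]].
have [v [p [q E]]] := inj_amalgamation h2 g2.
exists v, (compI p h1), (compI q g3).
by rewrite !act_sumI_compI E1 -act_sumI_compI E act_sumI_compI E2 -act_sumI_compI.
Qed.

Lemma teqv_cospan (z w : tcar X a) : teqv X a z w <-> cospan z w.
Proof.
split.
  elim=> {z w} [[b y] [b' y'] [h /= E]|z|z w _|z w u _ IH1 _ IH2].
  - exists b', h, (idI b') => /=.
    by rewrite E [RHS]act_id_pointwise //; inj_pointwise.
  - exact: cospan_refl.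
  - exact: cospan_sym.
  - exact: cospan_trans IH1 IH2.
case: z w => b y [b' y'] [e [h [h' /= E]]].
apply: (rst_trans _ _ _ (existT _ e (act (sumI (idI a) h) y))).
  by apply: rst_step; exists h.
by apply: rst_sym; apply: rst_step; exists h' => /=; rewrite E.
Qed.

Lemma tcls_eq (z w : tcar X a) : tcls z = tcls w <-> cospan z w.
Proof.
rewrite -teqv_cospan; split.
  by move/(congr1 (@proj1_sig _ _)) => /= ->; apply: rst_refl.
move=> zw; rewrite /tcls.
have E : teqv X a z = teqv X a w.
  apply: functional_extensionality => u; apply: propositional_extensionality.
  by split; [apply: rst_trans (rst_sym _ _ _ _ zw)|apply: rst_trans zw].
move: (ex_intro _ z _) (ex_intro _ w _); rewrite E => p1 p2.
by rewrite (proof_irrelevance _ p1 p2).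
Qed.

Lemma tcls_trepr (t : Tob X a) : tcls (trepr t) = t.
Proof.
case: t => P pf; rewrite /trepr /=.
case: (constructive_indefinite_description _ pf) => z ez /=.
by subst P; rewrite /tcls; congr exist; apply: proof_irrelevance.
Qed.

Lemma trepr_cospan (z : tcar X a) : cospan (trepr (tcls z)) z.
Proof. by apply/tcls_eq; rewrite tcls_trepr. Qed.

Lemma tcls_surj (t : Tob X a) : exists b (y : X (a + b)), t = tcls (existT _ b y).
Proof. by rewrite -(tcls_trepr t); case: (trepr t) => b y; exists b, y. Qed.

End Quotient.

Arguments tcls_eq {X} HX {a z w}.

Lemma Tact_tcls (X : psh) (HX : is_functor X) m n (f : inj m n) b (y : X (m + b)) :
  Tact X f (tcls (existT _ b y)) =
  tcls (existT (fun b => X (n + b)) b (act (sumI f (idI b)) y)).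
Proof.
rewrite /Tact /=; case: (trepr _) (trepr_cospan HX (existT _ b y)) => b' y'.
case=> e [h [h' /= E]]; apply/(tcls_eq HX); exists e, h, h' => /=.
have act_swap k (g : inj k e) (u : X (m + k)) :
    act (sumI (idI n) g) (act (sumI f (idI k)) u) =
    act (sumI f (idI e)) (act (sumI (idI m) g) u).
  by rewrite !act_compI //; apply: act_ext; inj_pointwise.
by rewrite !act_swap E.
Qed.

Lemma T_functor (X : psh) : is_functor X -> is_functor (T X).
Proof.
move=> HX; split=> [n t|m n p f g t]; have [b [y ->]] := tcls_surj t.
  by rewrite /= Tact_tcls // act_id_pointwise //; inj_pointwise.
rewrite /= !Tact_tcls // act_compI //.
by congr tcls; congr existT; apply: act_ext; inj_pointwise.
Qed.

Lemma pprod_functor (X Y : psh) : is_functor X -> is_functor Y -> is_functor (pprod X Y).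
Proof.
move=> [HX1 HX2] [HY1 HY2]; split=> [n [x y]|m n p f g [x y]] /=.
  by rewrite HX1 HY1.
by rewrite HX2 HY2.
Qed.

Lemma ppow_functor (X : psh) n : is_functor X -> is_functor (ppow X n).
Proof. by move=> HX; elim: n => [|n IH] //=; apply: pprod_functor. Qed.

Lemma mu_tcls (X : psh) (HX : is_functor X) a c d (w : X ((a + c) + d)) :
  @mu X a (tcls (existT (fun c => T X (a + c)) c (tcls (existT _ d w)))) =
  tcls (existT (fun b => X (a + b)) (c + d)
               (act (Inj _ (@cast_ord_inj _ _ (esym (addnA a c d)))) w)).
Proof.
have HT := T_functor HX.
rewrite /mu /=; case: (trepr _) (trepr_cospan HT (existT _ c (tcls (existT _ d w)))).
move=> c2 S2 [e [h [h2 /= E]]]; move: (tcls_trepr S2) E.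
case: (trepr S2) => d2 w2 /= <-; rewrite !Tact_tcls // => /(tcls_eq HX) [e' [k [k2 /= E]]].
apply/(tcls_eq HX); exists (e + e'), (sumI h k), (sumI h2 k2) => /=.
have act_assoc c0 d0 (h0 : inj c0 e) (k0 : inj d0 e') (u : X ((a + c0) + d0)) :
    act (sumI (idI a) (sumI h0 k0)) (act (Inj _ (@cast_ord_inj _ _ (esym (addnA a c0 d0)))) u) =
    act (Inj _ (@cast_ord_inj _ _ (esym (addnA a e e'))))
      (act (sumI (idI (a + e)) k0) (act (sumI (sumI (idI a) h0) (idI d0)) u)).
  by rewrite !act_compI //; apply: act_ext; inj_pointwise.
by rewrite !act_assoc E.
Qed.

Lemma Tmap_tcls (X Y : psh) (HX : is_functor X) (HY : is_functor Y) (al : nat_trans X Y) :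
  is_natural al -> forall a b (y : X (a + b)),
  Tmap al a (tcls (existT _ b y)) = tcls (existT (fun b => Y (a + b)) b (al _ y)).
Proof.
move=> Hal a b y; rewrite /Tmap /=; case: (trepr _) (trepr_cospan HX (existT _ b y)).
by move=> b' y' [e [h [h' /= E]]]; apply/(tcls_eq HY); exists e, h, h' => /=; rewrite -!Hal E.
Qed.

(** * Strength and naturality *)

Section Strength.

Variables (A B : psh) (HA : is_functor A) (HB : is_functor B).

Let HAB := pprod_functor HA HB.

Lemma tstr_tcls a (p : A a) b (y : B (a + b)) :
  tstr A B a (p, tcls (existT _ b y)) =
  tcls (existT (fun b => pprod A B (a + b)) b (act (Inj _ (@lshift_inj a b)) p, y)).
Proof.
rewrite /tstr /=; case: (trepr _) (trepr_cospan HB (existT _ b y)).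
move=> b' y' [e [h [h' /= E]]]; apply/(tcls_eq HAB); exists e, h, h' => /=.
by rewrite E; congr pair; rewrite !act_compI //; apply: act_ext; inj_pointwise.
Qed.

Lemma tcostr_tcls a d (w : A (a + d)) (q : B a) :
  tcostr A B a (tcls (existT _ d w), q) =
  tcls (existT (fun b => pprod A B (a + b)) d (w, act (Inj _ (@lshift_inj a d)) q)).
Proof.
rewrite /tcostr /=; case: (trepr _) (trepr_cospan HA (existT _ d w)).
move=> d' w' [e [h [h' /= E]]]; apply/(tcls_eq HAB); exists e, h, h' => /=.
by rewrite E; congr pair; rewrite !act_compI //; apply: act_ext; inj_pointwise.
Qed.

Lemma tstr_natural : is_natural (tstr A B).
Proof.
move=> m n f [p t]; have [b [y ->]] := tcls_surj t.
rewrite /= Tact_tcls // !tstr_tcls // Tact_tcls //; congr tcls; congr existT => /=.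
by congr pair; rewrite !act_compI //; apply: act_ext; inj_pointwise.
Qed.

Lemma tcostr_natural : is_natural (tcostr A B).
Proof.
move=> m n f [t q]; have [b [y ->]] := tcls_surj t.
rewrite /= Tact_tcls // !tcostr_tcls // Tact_tcls //; congr tcls; congr existT => /=.
by congr pair; rewrite !act_compI //; apply: act_ext; inj_pointwise.
Qed.

End Strength.

Lemma eta_natural (X : psh) : is_functor X -> is_natural (eta X).
Proof.
move=> HX m n f x; rewrite /eta /= Tact_tcls //; congr tcls; congr existT.
by rewrite !act_compI //; apply: act_ext; inj_pointwise.
Qed.

Lemma mu_natural (X : psh) : is_functor X -> is_natural (@mu X).
Proof.
move=> HX m n f F; have HT := T_functor HX.
have [c [t ->]] := tcls_surj F; have [d [w ->]] := tcls_surj t.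
rewrite /= Tact_tcls // /= Tact_tcls // !mu_tcls // Tact_tcls //.
congr tcls; congr existT.
by rewrite !act_compI //; apply: act_ext; inj_pointwise.
Qed.

Lemma Tmap_natural (X Y : psh) (al : nat_trans X Y) :
  is_functor X -> is_functor Y -> is_natural al -> is_natural (Tmap al).
Proof.
move=> HX HY Hal m n f t; have [b [y ->]] := tcls_surj t.
by rewrite /= Tact_tcls // !Tmap_tcls // Tact_tcls // Hal.
Qed.

Lemma kcomp_natural (A B C : psh) (g : nat_trans B (T C)) (f : nat_trans A (T B)) :
  is_functor B -> is_functor C -> is_natural g -> is_natural f -> is_natural (kcomp g f).
Proof.
move=> HB HC Hg Hf m n h x.
by rewrite /kcomp Hf (Tmap_natural HB (T_functor HC) Hg) (mu_natural HC).
Qed.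

Lemma nabla_tcls (A B : psh) (HA : is_functor A) (HB : is_functor B)
    a d (w : A (a + d)) b (y : B (a + b)) :
  nabla A B a (tcls (existT _ d w), tcls (existT _ b y)) =
  tcls (existT (fun b => pprod A B (a + b)) (b + d)
    (act (Inj _ (@cast_ord_inj _ _ (esym (addnA a b d))))
       (act (sumI (Inj _ (@lshift_inj a b)) (idI d)) w),
     act (Inj _ (@cast_ord_inj _ _ (esym (addnA a b d))))
       (act (Inj _ (@lshift_inj (a + b) d)) y))).
Proof.
have HAB := pprod_functor HA HB; have HTA := T_functor HA.
rewrite /nabla tstr_tcls // /= Tact_tcls // Tmap_tcls ?tcostr_tcls ?mu_tcls //.
- exact: pprod_functor.
- exact: T_functor.
- exact: tcostr_natural.
Qed.

Lemma nabla_natural (A B : psh) : is_functor A -> is_functor B -> is_natural (nabla A B).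
Proof.
move=> HA HB m n f p; have HAB := pprod_functor HA HB.
have Htcostr := tcostr_natural HA HB.
have HTAB := pprod_functor (T_functor HA) HB.
rewrite /nabla (tstr_natural (T_functor HA) HB).
by rewrite (Tmap_natural HTAB (T_functor HAB) Htcostr) (mu_natural HAB).
Qed.

Lemma force_pow_natural (X : psh) n : is_functor X -> is_natural (force_pow X n).
Proof.
move=> HX; elim: n => [|n IH] /=; first exact: eta_natural.
move=> m k h [p t]; rewrite /ktensor /= IH.
exact: (nabla_natural (ppow_functor n HX) HX h (force_pow X n m p, t)).
Qed.

Lemma diag_natural (Y : psh) n : is_natural (diag Y n).
Proof. by elim: n => [|n IH] //= m k f y; rewrite IH. Qed.

Lemma samp_natural (X : psh) n : is_functor X -> is_natural (samp X n).
Proof.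
move=> HX; have HTn := ppow_functor n (T_functor HX).
apply: kcomp_natural; [exact: HTn|exact: ppow_functor|exact: force_pow_natural|].
by move=> m k f t; rewrite /copy diag_natural eta_natural.
Qed.

(** * Sampling *)

(* Components are counted from the last factor. *)
Fixpoint pnth (Y : psh) (n a : nat) : ppow Y n a -> nat -> option (Y a) :=
  match n return ppow Y n a -> nat -> option (Y a) with
  | 0 => fun _ _ => None
  | n'.+1 => fun p i => if i is i'.+1 then @pnth Y n' a p.1 i' else Some p.2
  end.
Arguments pnth {Y n a}.

Lemma pnth_act (Y : psh) n m k (f : inj m k) (p : ppow Y n m) i :
  pnth (act f p) i = omap (act f) (pnth p i).
Proof. by elim: n p i => [|n IH] p [|i] //=. Qed.

Lemma block_le n b i : i < n -> i * b + b <= iter n (addn b) 0.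
Proof. by move=> lti; rewrite iter_addn_0 -mulSnr mulnC leq_mul2l lti orbT. Qed.

Definition block_shift a b N i (M : inj (a + b) N) : Prop :=
  forall v, injn M v = if v < a + b then (if v < a then v else v + i * b) else 0.

Lemma force_pow_diag_tcls (X : psh) (HX : is_functor X) n a b (y : X (a + b)) :
  exists P, force_pow X n a (diag (T X) n a (tcls (existT _ b y))) =
    tcls (existT _ (iter n (addn b) 0) P) /\
  forall i, i < n -> exists M : inj (a + b) (a + iter n (addn b) 0),
    block_shift i M /\ pnth P i = Some (act M y).
Proof.
elim: n => [|n [P [EP HP]]] /=; first by exists tt.
rewrite /ktensor /= EP nabla_tcls //; last exact: ppow_functor.
eexists; split; first reflexivity.
pose cast_b := Inj _ (@cast_ord_inj _ _ (esym (addnA a b (iter n (addn b) 0)))).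
move=> [|i] lti.
  exists (compI cast_b (Inj _ (@lshift_inj (a + b) (iter n (addn b) 0)))).
  split=> [v|]; last by rewrite /= act_compI.
  by injn_simpl; injn_arith.
have [M' [HM' EM']] := HP i lti.
exists (compI cast_b (compI (sumI (Inj _ (@lshift_inj a b)) (idI (iter n (addn b) 0))) M')).
split=> [v|].
  have := block_le b lti; rewrite mulSn; injn_simpl; rewrite HM'; injn_arith.
by rewrite /= !pnth_act EM' /= !act_compI //; congr Some; apply: act_ext.
Qed.

Lemma samp_tcls (X : psh) (HX : is_functor X) n a b (y : X (a + b)) :
  exists Q, samp X n a (tcls (existT _ b y)) =
    tcls (existT (fun d => ppow X n (a + d)) (iter n (addn b) 0) Q) /\
  forall i, i < n -> exists M : inj (a + b) (a + iter n (addn b) 0),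
    block_shift i M /\ pnth Q i = Some (act M y).
Proof.
have HT := T_functor HX; have HTn := ppow_functor n HT; have HXn := ppow_functor n HX.
have HTXn := T_functor HXn.
rewrite /samp /kcomp /copy /eta Tmap_tcls //; last exact: force_pow_natural.
rewrite -diag_natural /= Tact_tcls //.
pose cast0 := Inj _ (@cast_ord_inj _ _ (esym (addn0 a))).
have [P [-> HP]] := force_pow_diag_tcls HX n (act (sumI cast0 (idI b)) y).
rewrite mu_tcls //; eexists; split; first reflexivity.
move=> i lti; have [M [HM EM]] := HP i lti.
exists (compI (Inj _ (@cast_ord_inj _ _ (esym (addnA a 0 (iter n (addn b) 0)))))
          (compI M (sumI cast0 (idI b)))).
split=> [v|].
  by have := block_le b lti; injn_simpl; rewrite HM; injn_arith.
by rewrite pnth_act EM /= !act_compI //; congr Some; apply: act_ext.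
Qed.

Lemma samp_tcls_tcls (X : psh) (HX : is_functor X) n a c b (y : X ((a + c) + b)) :
  exists R, mu a (Tmap (samp X n) a
                  (tcls (existT (fun c => T X (a + c)) c (tcls (existT _ b y))))) =
    tcls (existT (fun d => ppow X n (a + d)) (c + iter n (addn b) 0) R) /\
  forall i, i < n -> exists M : inj ((a + c) + b) (a + (c + iter n (addn b) 0)),
    block_shift i M /\ pnth R i = Some (act M y).
Proof.
have HXn := ppow_functor n HX; have HTXn := T_functor HXn.
rewrite Tmap_tcls //; [|exact: T_functor|exact: samp_natural].
have [Q [-> HQ]] := samp_tcls HX n y; rewrite mu_tcls //.
eexists; split; first reflexivity.
move=> i lti; have [M [HM EM]] := HQ i lti.
exists (compI (Inj _ (@cast_ord_inj _ _ (esym (addnA a c (iter n (addn b) 0))))) M).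
split=> [v|]; last by rewrite pnth_act EM /= act_compI.
by have := block_le b lti; injn_simpl; rewrite HM; injn_arith.
Qed.

(** * Separating outer from inner names *)

Definition shift_inj m k off (H : off + k <= m) : inj k m.
Proof. by apply: (@inj_of_nat k m (addn off)) => [v|v w _ _ /addnI]; lia. Defined.

Lemma injn_shift_inj m k off (H : off + k <= m) v :
  injn (shift_inj H) v = if v < k then off + v else 0.
Proof. exact: injn_of_nat. Qed.

Definition block_avoids (S : pred nat) m e (H : inj m e) off b i : Prop :=
  forall w, off + i * b <= w -> w < off + i * b + b -> ~~ S (injn H w).

Definition separate a e (S : pred nat) : inj (a + e) (a + e + e).
Proof.
apply: (@inj_of_nat _ _ (fun v => if v < a then v else if S (v - a) then v else v + e)).
  by move=> v lv; repeat case: ifP => ?; lia.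
by move=> v w lv lw; repeat case: ifP => ?; lia.
Defined.

Lemma injn_separate a e S v : injn (separate a e S) v =
  if v < a + e then (if v < a then v else if S (v - a) then v else v + e) else 0.
Proof. exact: injn_of_nat. Qed.

Lemma act_separate_block (X : psh) (HX : is_functor X) a c b N e i
    (Hh : inj (c + N) e) (bk : c + i * b + b <= c + N)
    (M : inj ((a + c) + b) (a + (c + N))) (S : pred nat) (y : X ((a + c) + b)) :
  block_shift i M -> (forall j, j < c -> S (injn Hh j)) -> block_avoids S Hh c b i ->
  act (sumI (idI (a + e)) (compI Hh (shift_inj bk)))
      (act (sumI (sumI (idI a) (compI Hh (Inj _ (@lshift_inj c N)))) (idI b)) y) =
  act (separate a e S) (act (sumI (idI a) Hh) (act M y)).
Proof.
move=> HM HS1 HS2; rewrite !act_compI //; apply: act_ext => o; have := ltn_ord o.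
injn_simpl; rewrite HM injn_separate !injn_shift_inj; set v := val o => lv.
case: (ltnP v a) => va; first by injn_arith.
case: (ltnP v (a + c)) => vc.
  have := HS1 (v - a); injn_arith.
have := HS2 (v + i * b - a); injn_arith.
Qed.

Lemma card_meeting_disjoint (I T : finType) (B : I -> {set T}) (R : {set T}) :
  (forall i j, i != j -> [disjoint B i & B j]) ->
  #|[set i | ~~ [disjoint B i & R]]| <= #|R|.
Proof.
move=> disjB; set A := [set i | _]; pose f i := [pick x in B i :&: R].
have fA i : i \in A -> exists2 x, x \in B i :&: R & f i = Some x.
  rewrite inE -setI_eq0 => /set0Pn [x Bx]; rewrite /f.
  by case: pickP => [y By|/(_ x)]; [exists y|rewrite Bx].
have inj_f : {in A &, injective f}.
  move=> i j /fA [x Bx ->] /fA [y By ->] [xy]; apply/eqP/negPn/negP => /disjB ij.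
  move: Bx By; rewrite xy !inE => /andP [Biy _] /andP [Bjy _].
  by rewrite (disjointFr ij Biy) in Bjy.
rewrite -(card_in_imset inj_f) -(card_imset R (@Some_inj _)); apply: subset_leq_card.
by apply/subsetP => _ /imsetP [i /fA [x Bx ->] ->]; rewrite imset_f //; case/setIP: Bx.
Qed.

Lemma block_index_inj b i1 i2 k1 k2 :
  k1 < b -> k2 < b -> i1 * b + k1 = i2 * b + k2 -> i1 = i2.
Proof.
move=> lt1 lt2 /(congr1 (divn^~ b)); have b_gt0 : 0 < b by lia.
by rewrite !divnMDl // !divn_small // !addn0.
Qed.

Definition block_image m e (H : inj m e) (off b i : nat) : {set 'I_e} :=
  [set x | [exists j : 'I_b, injn H (off + i * b + j) == val x]].

Lemma block_image_disjoint off n b e (H : inj (off + iter n (addn b) 0) e) (i j : 'I_n) :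
  i != j -> [disjoint block_image H off b i & block_image H off b j].
Proof.
move=> ij; rewrite -setI_eq0; apply/eqP/setP => x; rewrite !inE.
apply/negbTE/negP => /andP [/existsP [k1 /eqP e1] /existsP [k2 /eqP e2]].
have := block_le b (ltn_ord i); have := block_le b (ltn_ord j).
have lk1 := ltn_ord k1; have lk2 := ltn_ord k2 => lj li.
move: e2; rewrite -e1 => /injn_inj eq12.
have : i * b + k1 = j * b + k2.
  by apply/eqP; rewrite -(eqn_add2l off) !addnA eq12 //; lia.
by move/(block_index_inj lk1 lk2)/val_inj => ji; rewrite ji eqxx in ij.
Qed.

Lemma block_image_avoid m e (H : inj m e) (S : pred nat) off b i :
  off + i * b + b <= m -> [disjoint block_image H off b i & [set x : 'I_e | S x]] ->
  block_avoids S H off b i.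
Proof.
move=> bm disj w lw wl; apply/negP => Sw.
have lwm : w < m by lia.
pose x := Ordinal (injn_lt H lwm).
have lk : w - (off + i * b) < b by lia.
have Bx : x \in block_image H off b i.
  by rewrite inE; apply/existsP; exists (Ordinal lk); rewrite /= subnKC.
by move: (disjointFr disj Bx); rewrite inE /= Sw.
Qed.

Definition outer_names c c' (H H' : nat -> nat) : pred nat :=
  [pred w | [exists j : 'I_c, H j == w] || [exists j : 'I_c', H' j == w]].

Lemma card_outer_names c c' m m' e (H : inj (c + m) e) (H' : inj (c' + m') e) :
  #|[set x : 'I_e | outer_names c c' (injn H) (injn H') x]| <= c + c'.
Proof.
set R := [set x | _].
have R_sub : R \subset [set H (lshift m j) | j : 'I_c] :|: [set H' (lshift m' j) | j : 'I_c'].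
  apply/subsetP => x; rewrite !inE => /orP [] /existsP [j /eqP Hj]; apply/orP;
    [left|right]; apply/imsetP; exists j => //; apply: val_inj; by rewrite injnE /= Hj.
apply: leq_trans (subset_leq_card R_sub) _; apply: leq_trans (leq_card_setU _ _) _.
by apply: leq_add; apply: leq_trans (leq_imset_card _ _) _; rewrite card_ord.
Qed.

Lemma exists_separated_block c c' n b b' e
    (H : inj (c + iter n (addn b) 0) e) (H' : inj (c' + iter n (addn b') 0) e) :
  (c + c').*2 < n ->
  let S := outer_names c c' (injn H) (injn H') in
  exists2 i, i < n & block_avoids S H c b i /\ block_avoids S H' c' b' i.
Proof.
move=> ltn S; set R := [set x : 'I_e | S x].
pose A := [set i : 'I_n | ~~ [disjoint block_image H c b i & R]].
pose A' := [set i : 'I_n | ~~ [disjoint block_image H' c' b' i & R]].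
have cardA : #|A| <= c + c'.
  exact: leq_trans (card_meeting_disjoint _ (block_image_disjoint H)) (card_outer_names H H').
have cardA' : #|A'| <= c + c'.
  exact: leq_trans (card_meeting_disjoint _ (block_image_disjoint H')) (card_outer_names H H').
have : ~~ ([set: 'I_n] \subset A :|: A').
  apply/negP => /subset_leq_card; rewrite cardsT card_ord => le_nA.
  by have := leq_trans le_nA (leq_card_setU A A'); lia.
case/subsetPn => i _; rewrite !inE negb_or !negbK => /andP [disjA disjA'].
exists i; first exact: ltn_ord.
have := block_le b (ltn_ord i); have := block_le b' (ltn_ord i) => bnd' bnd.
by split; [apply: (block_image_avoid _ disjA)|apply: (block_image_avoid _ disjA')]; lia.
Qed.

Lemma tcls_tcls_eq_of_separated (X : psh) (HX : is_functor X) a c c' b b' N N' e i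
    (H : inj (c + N) e) (H' : inj (c' + N') e)
    (bk : c + i * b + b <= c + N) (bk' : c' + i * b' + b' <= c' + N')
    (M : inj ((a + c) + b) (a + (c + N))) (M' : inj ((a + c') + b') (a + (c' + N')))
    (y : X ((a + c) + b)) (y' : X ((a + c') + b')) :
  let S := outer_names c c' (injn H) (injn H') in
  block_shift i M -> block_shift i M' -> block_avoids S H c b i -> block_avoids S H' c' b' i ->
  act (sumI (idI a) H) (act M y) = act (sumI (idI a) H') (act M' y') ->
  tcls (existT (fun c => T X (a + c)) c (tcls (existT _ b y))) =
  tcls (existT (fun c => T X (a + c)) c' (tcls (existT _ b' y'))).
Proof.
move=> S HM HM' sepH sepH' E.
have SH j : j < c -> S (injn H j).
  by move=> lj; apply/orP; left; apply/existsP; exists (Ordinal lj).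
have SH' j : j < c' -> S (injn H' j).
  by move=> lj; apply/orP; right; apply/existsP; exists (Ordinal lj).
apply/(tcls_eq (T_functor HX)).
exists e, (compI H (Inj _ (@lshift_inj c N))), (compI H' (Inj _ (@lshift_inj c' N'))) => /=.
rewrite !Tact_tcls //; apply/(tcls_eq HX).
exists e, (compI H (shift_inj bk)), (compI H' (shift_inj bk')) => /=.
rewrite (act_separate_block HX bk y HM SH sepH).
by rewrite (act_separate_block HX bk' y' HM' SH' sepH') E.
Qed.

Theorem theorem9p6 :
  forall X : psh, is_functor X ->
  forall A : psh, is_functor A ->
  forall f g : nat_trans A (T (T X)),
    is_natural f -> is_natural g ->
    (forall (n a : nat) (x : A a),
        kcomp (samp X n) f a x = kcomp (samp X n) g a x) ->
    forall (a : nat) (x : A a), f a x = g a x.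
Proof.
move=> X HX A _ f g _ _ eq_samp a x.
have [c [t Ef]] := tcls_surj (f a x); have [b [y Et]] := tcls_surj t; subst t.
have [c' [t' Eg]] := tcls_surj (g a x); have [b' [y' Et']] := tcls_surj t'; subst t'.
pose n := (c + c').*2.+1.
move: (eq_samp n a x); rewrite /kcomp Ef Eg.
have [R [-> HR]] := samp_tcls_tcls HX n y; have [R' [-> HR']] := samp_tcls_tcls HX n y'.
case/(tcls_eq (ppow_functor n HX)) => e [H [H' E]].
change (inj (c + iter n (addn b) 0) e) in H; change (inj (c' + iter n (addn b') 0) e) in H'.
have [i lti [sepH sepH']] := exists_separated_block H H' (ltnSn _).
have [M [HM EM]] := HR i lti; have [M' [HM' EM']] := HR' i lti.
have bk : c + i * b + b <= c + iter n (addn b) 0 by rewrite -addnA leq_add2l block_le.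
have bk' : c' + i * b' + b' <= c' + iter n (addn b') 0 by rewrite -addnA leq_add2l block_le.
apply: (tcls_tcls_eq_of_separated HX bk bk' HM HM' sepH sepH').
move: (congr1 (pnth^~ i) E); rewrite !pnth_act [projT2 _]/= [projT2 _]/= EM EM'.
by case.
Qed.
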